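(* Let $\hat Q_i:\mathcal X\times\mathcal A\to[0,1]$ ($i\in[m]$) be arbitrary and let $\hat\pi=\prod_i\hat\pi_i$ be a product policy that, for every context $x$, is an exact regularized Nash equilibrium of the empirical game $\{\hat Q_i(x,\cdot)\}_i$ (i.e. for all $i$, $\hat\pi_i(\cdot|x)$ maximizes $\pi_i'\mapsto\mathbb E_{a_i\sim\pi_i',\boldsymbol a_{-i}\sim\hat\pi_{-i}(\cdot|x)}[\hat Q_i(x,\boldsymbol a)]-\eta^{-1}\mathrm{KL}(\pi_i'\|\pi_i^{\mathrm{ref}}(\cdot|x))$ over $\Delta(\mathcal A_i)$). Let $\mathcal Z_i=\hat Q_i-r_i^\star$. Then for every $i\in[m]$ and every $x$, $$V_i^{\dagger,\hat\pi_{-i}}(x)-V_i^{\hat\pi}(x)\le\frac\eta2\max_{a_i\in\mathcal A_i}\mathbb E_{\boldsymbol a_{-i}\sim\hat\pi_{-i}(\cdot|x)}\big[\mathcal Z_i(x,a_i,\boldsymbol a_{-i})^2\big].$$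
   Context: $m$-player game: contexts $x\in\mathcal X$, finite action sets $\mathcal A_i$, $\mathcal A=\prod_i\mathcal A_i$, rewards $r_i^\star:\mathcal X\times\mathcal A\to[0,1]$, reference policies $\pi_i^{\mathrm{ref}}$, $\eta>0$. $V_i^\pi(x)=\mathbb E_{\boldsymbol a\sim\pi(\cdot|x)}[r_i^\star(x,\boldsymbol a)]-\eta^{-1}\mathrm{KL}(\pi_i(\cdot|x)\|\pi_i^{\mathrm{ref}}(\cdot|x))$ and $V_i^{\dagger,\nu_{-i}}(x)=\max_{\pi_i'}V_i^{(\pi_i',\nu_{-i})}(x)$, where $(\pi_i',\nu_{-i})$ is the joint policy $\pi_i'(a_i|x)\nu_{-i}(\boldsymbol a_{-i}|x)$; $\hat\pi_{-i}=\prod_{j\ne i}\hat\pi_j$. *)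

From HB Require Import structures.
From mathcomp Require Import all_boot all_order all_algebra.
From mathcomp Require Import all_classical all_reals all_analysis.
Set Implicit Arguments. Unset Strict Implicit. Unset Printing Implicit Defensive.
Import Order.TTheory GRing.Theory Num.Theory.
Local Open Scope ring_scope.

Section Defs.
Variables (R : realType) (m : nat) (A : 'I_m -> finType).

Definition profile := {dffun forall i : 'I_m, A i}.

Definition is_dist (T : finType) (p : T -> R) : Prop :=
  (forall t, 0 <= p t) /\ \sum_t p t = 1.

Definition prodprob (pol : forall j : 'I_m, A j -> R) (a : profile) : R :=
  \prod_j pol j (a j).

Definition expect (pol : forall j : 'I_m, A j -> R) (f : profile -> R) : R :=
  \sum_(a : profile) prodprob pol a * f a.

(* KL(p || q), with 0 ln 0 = 0 and value +oo when p is not absolutely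
   continuous w.r.t. q *)
Definition KL (T : finType) (p q : T -> R) : \bar R :=
  if [forall t, (q t == 0) ==> (p t == 0)]
  then (\sum_(t | p t != 0) p t * ln (p t / q t))%:E
  else +oo%E.

Definition reg_value (eta : R) (Q : profile -> R)
    (pol : forall j : 'I_m, A j -> R) (i : 'I_m) (ref : A i -> R) : \bar R :=
  ((expect pol Q)%:E - (eta^-1)%:E * KL (pol i) ref)%E.
Arguments reg_value : clear implicits.

Definition br_value (eta : R) (Q : profile -> R)
    (pol : forall j : 'I_m, A j -> R) (i : 'I_m) (ref : A i -> R) : \bar R :=
  ereal_sup [set reg_value eta Q (mathcomp_extra.dfwith pol i p') i ref
            | p' in [set p' : A i -> R | is_dist p']].

End Defs.
Arguments reg_value {R m A} eta Q pol i ref.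
Arguments br_value : clear implicits.
Arguments br_value {R m A} eta Q pol i ref.

Arguments profile {m} A.

(* At a fixed context, player i faces a one-player KL-regularized problem whose
   payoff is the conditional expectation over the other players' actions:
   q = E_{a_-i}[Qhat] for the empirical game and r = E_{a_-i}[r*] for the true
   one.  By Gibbs' inequality the regularized value of such a problem is
   maximized exactly by the Gibbs policy gibbs q ~ ref * exp(eta q), with value
   eta^-1 ln Z_q.  Hence the equilibrium strategy of player i is gibbs q, and
   its best-response gap in the true game is
     eta^-1 ln E_{gibbs q}[exp(eta (r - q))] - E_{gibbs q}[r - q].
   The log-moment generating function u |-> ln E[exp(u Y)] has second
   derivative the tilted variance, at most max Y^2, so this gap is at most
   eta/2 * max (q - r)^2; Jensen bounds (q - r)^2 by the conditional second
   moment of Qhat - r*. *)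

From mathcomp Require Import all_boot all_order all_algebra.
From mathcomp Require Import all_classical all_reals all_analysis.
From mathcomp Require Import ring lra.

Set Implicit Arguments. Unset Strict Implicit. Unset Printing Implicit Defensive.
Import Order.TTheory GRing.Theory Num.Theory.
Local Open Scope ring_scope.

Section RealFacts.
Context {R : realType}.

Lemma is_derive_expRMr (c x : R) :
  is_derive x 1 (fun u : R => expR (u * c)) (expR (x * c) * c).
Proof.
have dlin : is_derive x 1 (fun u : R => u * c) c.
  have := is_deriveM (is_derive_id x 1) (is_derive_cst c x 1).
  by move/is_derive_eq; apply; rewrite /GRing.scale /=; ring.
exact: (@is_derive1_comp R expR _ x _ c (is_derive_expR _) dlin).
Qed.

Lemma is_derive_fsum (T : finType) (h : T -> R -> R) (dh : T -> R) (x : R) :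
  (forall t, is_derive x 1 (h t) (dh t)) ->
  is_derive x 1 (fun u => \sum_t h t u) (\sum_t dh t).
Proof.
move=> hd; have -> : (fun u => \sum_t h t u) = \sum_t h t.
  by apply/funext => u; rewrite fct_sumE.
by elim/big_ind2 : _ => // *; [exact: is_derive_cst | exact: is_deriveD].
Qed.

Lemma is_derive_le0_le {f df : R -> R} {a b : R} : a <= b ->
  (forall x : R, is_derive x 1 f (df x)) -> (forall x, a < x < b -> df x <= 0) ->
  f b <= f a.
Proof.
move=> + fd dfle; case: ltgtP => // [altb _|<- _ //].
rewrite -subr_le0; have [|c cab ->] := MVT altb (fun x _ => fd x).
  by apply: derivable_within_continuous => x _; case: (fd x).
by apply: mulr_le0_ge0; [apply: dfle; rewrite in_itv in cab | rewrite subr_ge0 ltW].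
Qed.

Lemma ln_le_subr1 (x : R) : 0 < x -> ln x <= x - 1.
Proof. by move=> x0; have := expR_ge1Dx (ln x); rewrite lnK ?posrE //; lra. Qed.

Lemma ln_eq_subr1 (x : R) : 0 < x -> ln x = x - 1 -> x = 1.
Proof.
move=> x0 lnx; have [ln0|ln0] := eqVneq (ln x) 0.
  by rewrite -(lnK x0) ln0 expR0.
by have := expR_gt1Dx ln0; rewrite lnK ?posrE //; lra.
Qed.

Lemma dist_sum_gt0 (T : finType) (w f : T -> R) :
  is_dist w -> (forall t, 0 < f t) -> 0 < \sum_t w t * f t.
Proof.
move=> [w0 w1] fpos; have [t0 wt0] : exists t0, 0 < w t0.
  apply/not_existsP => wle0; move: w1; rewrite big1 => [/eqP|t _].
    by rewrite eq_sym oner_eq0.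
  by apply/eqP; rewrite eq_le w0 andbT leNgt; apply/negP => /(wle0 t).
rewrite (bigD1 t0) //=; apply: ltr_pwDl; first by rewrite mulr_gt0.
by apply: sumr_ge0 => t _; rewrite mulr_ge0 // ltW.
Qed.

End RealFacts.

Section CumulantBound.
Context {R : realType} {T : finType}.
Variables (w y : T -> R) (s : R).
Hypotheses (w_dist : is_dist w) (y_sqr_le : forall t, y t ^+ 2 <= s).

Let mgf u := \sum_t w t * expR (u * y t).
Let mgf1 u := \sum_t (w t * y t) * expR (u * y t).
Let mgf2 u := \sum_t (w t * y t * y t) * expR (u * y t).
Let mean := \sum_t w t * y t.

Let is_derive_wsum (c : T -> R) (u : R) :
  is_derive u 1 (fun v => \sum_t c t * expR (v * y t)) (\sum_t (c t * y t) * expR (u * y t)).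
Proof.
apply: is_derive_eq; first by apply: is_derive_fsum => t;
  apply: is_deriveZ; apply: is_derive_expRMr.
by apply: eq_bigr => t _; rewrite /GRing.scale /=; ring.
Qed.

Let is_derive_mgf (u : R) : is_derive u 1 mgf (mgf1 u).
Proof. exact: is_derive_wsum. Qed.

Let is_derive_mgf1 (u : R) : is_derive u 1 mgf1 (mgf2 u).
Proof. exact: (is_derive_wsum (fun t => w t * y t)). Qed.

Let mgf_gt0 u : 0 < mgf u.
Proof. by apply: dist_sum_gt0 => // t; rewrite expR_gt0. Qed.

Let mgf2_le u : mgf2 u <= s * mgf u.
Proof.
rewrite mulr_sumr; apply: ler_sum => t _.
have := y_sqr_le t; have := w_dist.1 t; have := expR_ge0 (u * y t).
move: (expR _) => e e0 wt yt.
have : 0 <= w t * e * (s - y t ^+ 2) by rewrite !mulr_ge0 ?subr_ge0.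
by rewrite expr2; nra.
Qed.

Let mgf0 : mgf 0 = 1.
Proof. by rewrite -w_dist.2; apply: eq_bigr => t _; rewrite mul0r expR0 mulr1. Qed.

Let mgf1_0 : mgf1 0 = mean.
Proof. by apply: eq_bigr => t _; rewrite mul0r expR0 mulr1. Qed.

(* [mgf1 / mgf] is the mean of [y] under the tilted weights [w t * expR (u * y t)];
   its derivative is the tilted variance, which is at most [s]. *)
Let tilted_mean_le (u : R) : 0 <= u -> mgf1 u <= (mean + u * s) * mgf u.
Proof.
move=> u0; pose f v := mgf1 v / mgf v - v * s.
pose df v := mgf2 v / mgf v - (mgf1 v / mgf v) ^+ 2 - s.
have fd (v : R) : is_derive v 1 f (df v).
  have := is_deriveB (is_deriveM (is_derive_mgf1 v)
      (is_deriveV (lt0r_neq0 (mgf_gt0 v)) (is_derive_mgf v)))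
    (is_deriveM (is_derive_id v 1) (is_derive_cst s v 1)).
  move/is_derive_eq; apply; rewrite /df /GRing.scale /=.
  by field; rewrite lt0r_neq0.
have : f u <= f 0.
  apply: (is_derive_le0_le u0 fd) => v _; rewrite /df.
  have : mgf2 v / mgf v <= s by rewrite ler_pdivrMr // mulrC mgf2_le.
  by have := sqr_ge0 (mgf1 v / mgf v); lra.
rewrite /f mgf0 mgf1_0 divr1 mul0r subr0 lerBlDr.
by rewrite ler_pdivrMr // addrC.
Qed.

Lemma ln_mgf_le : ln (\sum_t w t * expR (y t)) <= mean + s / 2.
Proof.
pose g v := - (v * mean) - v * v * (s / 2).
have gd (v : R) : is_derive v 1 g (- mean - v * s).
  have := is_deriveB
    (is_deriveN (is_deriveM (is_derive_id v 1) (is_derive_cst mean v 1)))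
    (is_deriveM (is_deriveM (is_derive_id v 1) (is_derive_id v 1))
      (is_derive_cst (s / 2) v 1)).
  by move/is_derive_eq; apply; rewrite /GRing.scale /=; field.
pose H v := mgf v * expR (g v).
pose dH v := expR (g v) * (mgf1 v - (mean + v * s) * mgf v).
have Hd (v : R) : is_derive v 1 H (dH v).
  have := is_deriveM (is_derive_mgf v) (is_derive1_comp (is_derive_expR (g v)) (gd v)).
  by move/is_derive_eq; apply; rewrite /dH /GRing.scale /=; ring.
have : H 1 <= H 0.
  apply: (is_derive_le0_le ler01 Hd) => v /andP[v0 _].
  by rewrite /dH pmulr_rle0 ?expR_gt0 // subr_le0 tilted_mean_le // ltW.
rewrite /H mgf0 /g !(mul0r, mulr0, oppr0, subr0, mul1r, expR0, mulr1).
have -> : \sum_t w t * expR (y t) = mgf 1 by apply: eq_bigr => t _; rewrite mul1r.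
rewrite -opprD expRN ler_pdivrMr ?expR_gt0 // mul1r => mgf1_le.
by rewrite -ler_expR lnK ?posrE.
Qed.

End CumulantBound.

Section GibbsInequality.
Context {R : realType} {T : finType}.
Variables (p g : T -> R).
Hypotheses (p_dist : is_dist p) (g_dist : is_dist g)
  (g_gt0 : forall t, p t != 0 -> 0 < g t).

Let p_gt0 t : p t != 0 -> 0 < p t.
Proof. by move=> ptn0; rewrite lt0r ptn0 p_dist.1. Qed.

Let sum_supp_p : \sum_(t | p t != 0) p t = 1.
Proof.
by rewrite -p_dist.2 big_mkcond; apply: eq_bigr => t _; case: eqP => // ->.
Qed.

Let sum_supp_g_le1 : \sum_(t | p t != 0) g t <= 1.
Proof.
rewrite -g_dist.2 [leRHS](bigID (fun t => p t != 0)) /= lerDl.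
by apply: sumr_ge0 => t _; exact: g_dist.1.
Qed.

Let gibbs_term_ge0 t : p t != 0 -> 0 <= g t - p t - p t * ln (g t / p t).
Proof.
move=> ptn0; have pt0 := p_gt0 ptn0.
have := ler_wpM2l (ltW pt0) (ln_le_subr1 (divr_gt0 (g_gt0 ptn0) pt0)).
have -> : p t * (g t / p t - 1) = g t - p t by field; rewrite lt0r_neq0.
lra.
Qed.

Lemma gibbs_ineq : \sum_(t | p t != 0) p t * ln (g t / p t) <= 0.
Proof.
apply: (@le_trans _ _ (\sum_(t | p t != 0) (g t - p t))).
  by apply: ler_sum => t /gibbs_term_ge0; rewrite subr_ge0.
by rewrite sumrB sum_supp_p subr_le0.
Qed.

Lemma gibbs_ineq_eq0 : \sum_(t | p t != 0) p t * ln (g t / p t) = 0 -> p = g.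
Proof.
move=> cross0.
have terms_sum : \sum_(t | p t != 0) (g t - p t - p t * ln (g t / p t)) =
    \sum_(t | p t != 0) g t - 1 by rewrite !sumrB sum_supp_p cross0 subr0.
have terms0 : \sum_(t | p t != 0) (g t - p t - p t * ln (g t / p t)) = 0.
  apply/eqP; rewrite eq_le terms_sum subr_le0 sum_supp_g_le1 -terms_sum /=.
  exact: sumr_ge0.
have g_out0 : \sum_(t | p t == 0) g t = 0.
  have sum_supp_g : \sum_(t | p t != 0) g t = 1.
    by apply/eqP; rewrite -subr_eq0 -terms_sum terms0.
  by have := g_dist.2; rewrite (bigID (fun t => p t == 0)) /= sum_supp_g => ?; lra.
apply/funext => t; have [pt0|ptn0] := eqVneq (p t) 0.
  by rewrite pt0 (psumr_eq0P (fun u _ => g_dist.1 u) g_out0) // pt0.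
have pt0 := p_gt0 ptn0; have x0 := divr_gt0 (g_gt0 ptn0) pt0.
have /eqP := psumr_eq0P gibbs_term_ge0 terms0 ptn0.
have -> : g t - p t = p t * (g t / p t - 1) by field; rewrite lt0r_neq0.
rewrite -mulrBr mulf_eq0 (negPf ptn0) subr_eq0 /= => /eqP/esym/(ln_eq_subr1 x0).
by move/divr1_eq.
Qed.

End GibbsInequality.

Section GibbsVariational.
Context {R : realType} {T : finType}.
Variables (ref : T -> R) (eta : R).
Hypotheses (eta_gt0 : 0 < eta) (ref_dist : is_dist ref).

Definition reg_value1 (f p : T -> R) : \bar R :=
  ((\sum_t p t * f t)%:E - (eta^-1)%:E * KL p ref)%E.

Definition gibbs_norm (f : T -> R) := \sum_t ref t * expR (eta * f t).

Definition gibbs (f : T -> R) t := ref t * expR (eta * f t) / gibbs_norm f.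

Definition abscont (p : T -> R) := [forall t, (ref t == 0) ==> (p t == 0)].

Lemma gibbs_norm_gt0 f : 0 < gibbs_norm f.
Proof. by apply: dist_sum_gt0 => // t; exact: expR_gt0. Qed.

Lemma gibbs_dist f : is_dist (gibbs f).
Proof.
split=> [t|]; first by rewrite divr_ge0 ?mulr_ge0 ?ref_dist.1 ?expR_ge0 ?ltW ?gibbs_norm_gt0.
by rewrite -mulr_suml divff // lt0r_neq0 ?gibbs_norm_gt0.
Qed.

Lemma gibbs_abscont f : abscont (gibbs f).
Proof. by apply/forallP => t; apply/implyP => /eqP reft0; rewrite /gibbs reft0 !mul0r. Qed.

Lemma abscont_ref_gt0 p t : abscont p -> p t != 0 -> 0 < ref t.
Proof.
move=> /forallP/(_ t)/implyP pref ptn0.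
by rewrite lt0r ref_dist.1 andbT; apply: contra ptn0.
Qed.

Lemma gibbs_gt0 f t : 0 < ref t -> 0 < gibbs f t.
Proof. by move=> reft; rewrite divr_gt0 ?mulr_gt0 ?expR_gt0 ?gibbs_norm_gt0. Qed.

Lemma reg_value1_Ny f p : ~~ abscont p -> reg_value1 f p = -oo%E.
Proof. by move=> /negPf pN; rewrite /reg_value1 /KL -/(abscont p) pN gt0_muley ?lte_fin ?invr_gt0. Qed.

Lemma reg_value1E f p : abscont p ->
  reg_value1 f p = (\sum_t p t * f t - eta^-1 * \sum_(t | p t != 0) p t * ln (p t / ref t))%:E.
Proof. by move=> pref; rewrite /reg_value1 /KL -/(abscont p) pref. Qed.

(* Gibbs variational identity:
   [eta * reg_value1 f p = ln (gibbs_norm f) - KL(p || gibbs f)]. *)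
Lemma reg_value1_gibbs_cross f p : is_dist p -> abscont p ->
  reg_value1 f p = (eta^-1 * (ln (gibbs_norm f) +
    \sum_(t | p t != 0) p t * ln (gibbs f t / p t)))%:E.
Proof.
move=> p_dist pref; rewrite reg_value1E //; congr EFin.
have Z0 := gibbs_norm_gt0 f.
have sum_supp_p : \sum_(t | p t != 0) p t = 1.
  by rewrite -p_dist.2 big_mkcond; apply: eq_bigr => t _; case: eqP => // ->.
have -> : \sum_t p t * f t = \sum_(t | p t != 0) p t * f t.
  by rewrite [RHS]big_mkcond; apply: eq_bigr => t _; case: eqP => // ->; rewrite mul0r.
rewrite -[ln _]mul1r -sum_supp_p mulr_suml -big_split /= mulr_sumr -sumrB.
rewrite mulr_sumr; apply: eq_bigr => t ptn0.
have pt0 : 0 < p t by rewrite lt0r ptn0 p_dist.1.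
have reft := abscont_ref_gt0 pref ptn0.
have gt0 := gibbs_gt0 f reft.
rewrite /gibbs !lnM ?lnV ?expRK ?posrE ?invr_gt0 ?mulr_gt0 ?expR_gt0 //.
  by field; rewrite lt0r_neq0.
by rewrite invr_gt0.
Qed.

Lemma reg_value1_le_ln_norm f p : is_dist p ->
  (reg_value1 f p <= (eta^-1 * ln (gibbs_norm f))%:E)%E.
Proof.
move=> p_dist; have [pref|pN] := boolP (abscont p); last by rewrite reg_value1_Ny ?leNye.
rewrite reg_value1_gibbs_cross // lee_fin ler_pM2l ?invr_gt0 // gerDl.
apply: gibbs_ineq => // [|t ptn0]; first exact: gibbs_dist.
exact/gibbs_gt0/(abscont_ref_gt0 pref ptn0).
Qed.

Lemma reg_value1_gibbs f : reg_value1 f (gibbs f) = (eta^-1 * ln (gibbs_norm f))%:E.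
Proof.
rewrite reg_value1_gibbs_cross ?gibbs_abscont //; last exact: gibbs_dist.
by rewrite big1 ?addr0 // => t gtn0; rewrite divff // ln1 mulr0.
Qed.

Lemma reg_value1_argmax f p : is_dist p ->
  (reg_value1 f (gibbs f) <= reg_value1 f p)%E -> p = gibbs f.
Proof.
move=> p_dist; have [pref|pN] := boolP (abscont p); last by rewrite reg_value1_gibbs reg_value1_Ny.
rewrite reg_value1_gibbs reg_value1_gibbs_cross // lee_fin ler_pM2l ?invr_gt0 // lerDl.
have gibbs_supp_gt0 t : p t != 0 -> 0 < gibbs f t.
  by move=> ptn0; exact/gibbs_gt0/(abscont_ref_gt0 pref ptn0).
move=> cross_ge0; apply: gibbs_ineq_eq0 => //; first exact: gibbs_dist.
apply/eqP; rewrite eq_le cross_ge0 andbT.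
by apply: gibbs_ineq => //; exact: gibbs_dist.
Qed.

Lemma reg_value1_gibbs_shift f h : reg_value1 h (gibbs f) =
  (eta^-1 * ln (gibbs_norm f) + \sum_t gibbs f t * (h t - f t))%:E.
Proof.
have := reg_value1_gibbs f; rewrite !reg_value1E ?gibbs_abscont // => -[<-].
have -> : \sum_t gibbs f t * (h t - f t) = \sum_t gibbs f t * h t - \sum_t gibbs f t * f t.
  by rewrite -sumrB; apply: eq_bigr => t _; rewrite mulrBr.
by congr EFin; ring.
Qed.

Lemma gibbs_norm_tilt f h :
  gibbs_norm h = gibbs_norm f * \sum_t gibbs f t * expR (eta * (h t - f t)).
Proof.
rewrite mulr_sumr; apply: eq_bigr => t _; rewrite mulrBr expRD expRN /gibbs.
by field; rewrite !lt0r_neq0 ?expR_gt0 ?gibbs_norm_gt0.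
Qed.

Lemma reg_value1_gap_le (q r ph : T -> R) (M : R) :
  is_dist ph -> (forall t, (q t - r t) ^+ 2 <= M) ->
  (forall p, is_dist p -> (reg_value1 q p <= reg_value1 q ph)%E) ->
  (ereal_sup [set reg_value1 r p | p in [set p | is_dist p]] - reg_value1 r ph
    <= (eta / 2 * M)%:E)%E.
Proof.
move=> ph_dist qr_le ph_max.
have -> : ph = gibbs q by apply: reg_value1_argmax => //; exact/ph_max/gibbs_dist.
have sup_le : (ereal_sup [set reg_value1 r p | p in [set p | is_dist p]]
    <= (eta^-1 * ln (gibbs_norm r))%:E)%E.
  by apply: ge_ereal_sup => _ [p p_dist <-]; exact: reg_value1_le_ln_norm.
apply: le_trans (leeB sup_le (lexx _)) _.
rewrite reg_value1_gibbs_shift -EFinB lee_fin.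
have y_sqr_le t : (eta * (r t - q t)) ^+ 2 <= eta ^+ 2 * M.
  rewrite exprMn; apply: ler_wpM2l; first by rewrite exprn_ge0 // ltW.
  by rewrite -sqrrN opprB.
have := ln_mgf_le (gibbs_dist q) y_sqr_le.
have -> : \sum_t gibbs q t * (eta * (r t - q t)) = eta * \sum_t gibbs q t * (r t - q t).
  by rewrite mulr_sumr; apply: eq_bigr => t _; ring.
rewrite (gibbs_norm_tilt q r) lnM ?posrE ?gibbs_norm_gt0 //; last first.
  by apply: dist_sum_gt0 => [|t]; [exact: gibbs_dist | exact: expR_gt0].
have eta_inv_ge0 : 0 <= eta^-1 by rewrite invr_ge0 ltW.
move=> /(ler_wpM2l eta_inv_ge0).
set S := \sum_t gibbs q t * (r t - q t).
have -> : eta^-1 * (eta * S + eta ^+ 2 * M / 2) = S + eta / 2 * M.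
  by field; rewrite lt0r_neq0.
by rewrite mulrDr; lra.
Qed.

End GibbsVariational.

Lemma sum_profile_prod (R : comPzSemiRingType) (m : nat) (A : 'I_m -> finType)
    (F : forall j, A j -> R) :
  \sum_(a : profile A) \prod_j F j (a j) = \prod_j \sum_(x : A j) F j x.
Proof.
rewrite (reindex (@dffun_of_fprod _ A)); last exact/onW_bij/dffun_of_fprod_bij.
transitivity (\sum_(t : fprod A) \prod_(i in 'I_m) [ffun x => F i x] (t i)).
  by apply: eq_bigr => t _; apply: eq_bigr => i _; rewrite !ffunE.
rewrite (@big_fprod R 0 1 *%R +%R _ A (fun j => [ffun x => F j x])).
rewrite -(bigA_distr_big_dep (fun i => tagged_with A i)
  (fun i j => untag 0 [ffun x => F i x] j)).
apply: eq_bigr => i _.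
by rewrite -(big_tag (fun j => [ffun x => F j x]) i); apply: eq_bigr => x _; rewrite ffunE.
Qed.

Lemma sqr_wsum_le (R : realFieldType) (T : finType) (P : pred T) (w z : T -> R) :
  (forall t, P t -> 0 <= w t) -> \sum_(t | P t) w t = 1 ->
  (\sum_(t | P t) w t * z t) ^+ 2 <= \sum_(t | P t) w t * z t ^+ 2.
Proof.
move=> w0 w1; set mu := \sum_(t | P t) w t * z t.
have : 0 <= \sum_(t | P t) w t * (z t - mu) ^+ 2.
  by apply: sumr_ge0 => t Pt; rewrite mulr_ge0 ?sqr_ge0 ?w0.
have -> : \sum_(t | P t) w t * (z t - mu) ^+ 2 =
    \sum_(t | P t) (w t * z t ^+ 2 - (2 * mu) * (w t * z t) + mu ^+ 2 * w t).
  by apply: eq_bigr => t _; ring.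
by rewrite big_split sumrB /= -!mulr_sumr w1 -/mu; lra.
Qed.

Definition expect_others {R : realType} {m : nat} {A : 'I_m -> finType}
    (pol : forall j : 'I_m, A j -> R) (i : 'I_m) (f : profile A -> R) (ai : A i) : R :=
  \sum_(a : profile A | a i == ai) (\prod_(j | j != i) pol j (a j)) * f a.
Arguments expect_others {R m A} pol i f ai.

Section OthersMarginal.
Context {R : realType} {m : nat} {A : 'I_m -> finType}.
Implicit Types (pol : forall j : 'I_m, A j -> R) (f : profile A -> R).

Lemma expect_split pol i f :
  expect pol f = \sum_(ai : A i) pol i ai * expect_others pol i f ai.
Proof.
rewrite /expect /prodprob (partition_big (fun a : profile A => a i) predT) //=.
apply: eq_bigr => ai _; rewrite mulr_sumr; apply: eq_bigr => a /eqP ai_eq.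
by rewrite (bigD1 i) //= ai_eq mulrA.
Qed.

Lemma expect_others_dfwith pol i (p' : A i -> R) f :
  expect_others (dfwith pol i p') i f = expect_others pol i f.
Proof.
apply/funext => ai; apply: eq_bigr => a _; congr (_ * _).
by apply: eq_bigr => j ji; rewrite dfwithout // eq_sym.
Qed.

Lemma expect_dfwith pol i (p' : A i -> R) f :
  expect (dfwith pol i p') f = \sum_(ai : A i) p' ai * expect_others pol i f ai.
Proof. by rewrite (expect_split _ i) dfwithin expect_others_dfwith. Qed.

Lemma sum_weights_others pol i (ai : A i) : (forall j, is_dist (pol j)) ->
  \sum_(a : profile A | a i == ai) \prod_(j | j != i) pol j (a j) = 1.
Proof.
(* Total mass of the product policy in which player i plays ai deterministically. *)
move=> pol_dist; pose d x : R := (x == ai)%:R.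
have := @expect_dfwith pol i d (fun=> 1).
rewrite (bigD1 ai) //= big1 => [|x /negPf xai]; last by rewrite /d xai mul0r.
rewrite /d eqxx mul1r addr0 /expect_others.
under eq_bigr do rewrite mulr1; move=> <-.
rewrite /expect /prodprob; under eq_bigr do rewrite mulr1.
rewrite sum_profile_prod big1 // => j _.
case: dfwithP => [|k _]; last exact: (pol_dist k).2.
by rewrite (bigD1 ai) //= big1 ?addr0 /d ?eqxx // => x /negPf ->.
Qed.

Lemma sqr_expect_others_le pol i f (ai : A i) : (forall j, is_dist (pol j)) ->
  expect_others pol i f ai ^+ 2 <= expect_others pol i (fun a => f a ^+ 2) ai.
Proof.
move=> pol_dist; apply: sqr_wsum_le; last exact: sum_weights_others.
by move=> a _; apply: prodr_ge0 => j _; exact: (pol_dist j).1.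
Qed.

Lemma expect_othersB pol i f g (ai : A i) :
  expect_others pol i f ai - expect_others pol i g ai =
  expect_others pol i (fun a => f a - g a) ai.
Proof. by rewrite -sumrB; apply: eq_bigr => a _; rewrite mulrBr. Qed.

Lemma reg_value_dfwith eta Q pol i (ref p' : A i -> R) :
  reg_value eta Q (dfwith pol i p') i ref = reg_value1 ref eta (expect_others pol i Q) p'.
Proof. by rewrite /reg_value expect_dfwith dfwithin. Qed.

Lemma reg_valueE eta Q pol i (ref : A i -> R) :
  reg_value eta Q pol i ref = reg_value1 ref eta (expect_others pol i Q) (pol i).
Proof. by rewrite /reg_value (expect_split _ i). Qed.

Lemma br_valueE eta Q pol i (ref : A i -> R) :
  br_value eta Q pol i ref =
  ereal_sup [set reg_value1 ref eta (expect_others pol i Q) p | p in [set p | is_dist p]].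
Proof. by congr ereal_sup; apply: eq_imagel => p _; exact: reg_value_dfwith. Qed.

End OthersMarginal.

Theorem mainTheorem6 (R : realType) (m : nat) (X : Type) (A : 'I_m -> finType)
    (rstar Qhat : 'I_m -> X -> profile A -> R)
    (piref pihat : forall i : 'I_m, X -> A i -> R) (eta : R) :
  0 < eta ->
  (forall i x a, 0 <= rstar i x a <= 1) ->
  (forall i x a, 0 <= Qhat i x a <= 1) ->
  (forall i x, is_dist (piref i x)) ->
  (forall i x, is_dist (pihat i x)) ->
  (* pihat(.|x) is an exact regularized Nash equilibrium of the game Qhat(x,.) *)
  (forall i x (p' : A i -> R), is_dist p' ->
     (reg_value eta (Qhat i x) (mathcomp_extra.dfwith (fun j => pihat j x) i p') i (piref i x)
      <= reg_value eta (Qhat i x) (fun j => pihat j x) i (piref i x))%E) ->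
  forall i x,
    (br_value eta (rstar i x) (fun j => pihat j x) i (piref i x)
     - reg_value eta (rstar i x) (fun j => pihat j x) i (piref i x)
     <= (eta / 2 *
         \big[Num.max/0]_(ai : A i)
           \sum_(a : profile A | a i == ai)
              (\prod_(j | j != i) pihat j x (a j)) *
              (Qhat i x a - rstar i x a) ^+ 2)%:E)%E.
Proof.
move=> eta_gt0 _ _ piref_dist pihat_dist pihat_NE i x.
set pol := fun j => pihat j x; have pol_dist j : is_dist (pol j) := pihat_dist j x.
rewrite br_valueE reg_valueE.
apply: (reg_value1_gap_le (q := expect_others pol i (Qhat i x)) eta_gt0
  (piref_dist i x) (pol_dist i)).
- move=> ai; rewrite expect_othersB.
  apply: le_trans (sqr_expect_others_le _ _ pol_dist) _.
  exact: le_bigmax.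
- by move=> p p_dist; rewrite -reg_value_dfwith -reg_valueE; exact: pihat_NE.
Qed.
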